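(* For every integer $m\ge 4$, $$\lambda(C_3(T_{m-2,2}))<\frac{m-2}{2}+\frac{32}{(m-3)^2}+\frac{16}{m-3}.$$
   Context: $\lambda(G)$ denotes the spectral radius of the adjacency matrix of $G$. $T_{p,2}$ is the complete bipartite graph on $p$ vertices with parts of sizes $\lfloor p/2\rfloor$ and $\lceil p/2\rceil$. $C_3(T_{m-2,2})$ is the $m$-vertex graph obtained by identifying one vertex of a triangle with one vertex of $T_{m-2,2}$ lying in the part of size $\lfloor (m-2)/2\rfloor$. *)

From HB Require Import structures.
From mathcomp Require Import all_boot all_order all_algebra.
From mathcomp Require Import classical_sets reals.
Set Implicit Arguments. Unset Strict Implicit. Unset Printing Implicit Defensive.
Import Order.TTheory GRing.Theory Num.Theory.
Local Open Scope ring_scope.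
Local Open Scope classical_set_scope.

Definition adj_mx (R : realType) (n : nat) (e : rel 'I_n) : 'M[R]_n :=
  \matrix_(i < n, j < n) (e i j)%:R.

(* Spectral radius: largest modulus of an eigenvalue.  For a real symmetric
   matrix (adjacency matrices of simple graphs) all eigenvalues are real,
   so real eigenvalues suffice. *)
Definition spectral_radius (R : realType) (n : nat) (A : 'M[R]_n) : R :=
  sup [set x : R | exists mu : R, eigenvalue A mu /\ x = `|mu|].

(* The graph C_3(T_{m-2,2}) on vertices 0..m-1:
   with p = m-2 and a = floor(p/2),
   - vertices 0..a-1 form the part of size floor(p/2) of T_{p,2},
   - vertices a..p-1 form the part of size ceil(p/2),
   - vertices p and p+1 together with vertex 0 form the triangle
     (vertex 0 of the small part is identified with a triangle vertex). *)
Definition C3T_rel (m : nat) (i j : nat) : bool :=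
  let p := (m - 2)%N in
  let a := p./2 in
  [|| [&& (i < p)%N, (j < p)%N & ((i < a)%N != (j < a)%N)],
      (i == 0%N) && ((j == p) || (j == p.+1)),
      (j == 0%N) && ((i == p) || (i == p.+1)),
      (i == p) && (j == p.+1) | (i == p.+1) && (j == p)].

Definition C3T (m : nat) : rel 'I_m := fun i j => C3T_rel m i j.
Arguments C3T m i j : clear implicits.

From HB Require Import structures.
From mathcomp Require Import all_boot all_order all_algebra.
From mathcomp Require Import classical_sets reals.
From mathcomp Require Import boolp zify ring lra.
Set Implicit Arguments. Unset Strict Implicit. Unset Printing Implicit Defensive.
Import Order.TTheory GRing.Theory Num.Theory.
Local Open Scope ring_scope.

(* A positive vector [w] with [w^T A <= L w^T] bounds every eigenvalue of a
   nonnegative matrix [A] by [L] (Collatz–Wielandt).  For C_3(T_{p,2}),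
   p = m - 2 and a = floor(p/2), such a vector with L = p/2 + 16/(p-1) is
   obtained by weighting the identified vertex 1 + 8/p, the larger part
   (a + 8/p)/L and every other vertex 1; checking [w^T A <= L w^T] then
   reduces to three polynomial inequalities in p and a.  The bound of the
   theorem exceeds L by 32/(p-1)^2 > 0. *)

Section CollatzWielandt.

Variables (R : realFieldType) (n : nat) (A : 'M[R]_n) (w : 'I_n -> R) (L : R).
Hypotheses (A_ge0 : forall i j, 0 <= A i j) (w_gt0 : forall i, 0 < w i).
Hypothesis wA_le : forall j, \sum_i A i j * w i <= L * w j.

Lemma eigenvalue_norm_le mu : eigenvalue A mu -> `|mu| <= L.
Proof.
case/eigenvalueP => v vA_mu v_neq0.
have /existsP[i0 vi0_neq0] : [exists i, v 0 i != 0].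
  apply: contraR v_neq0 => /existsPn v0; apply/eqP/rowP => i.
  by rewrite mxE; apply/eqP/negPn.
pose F i := `|v 0 i| / w i.
case: (@Order.TotalTheory.arg_maxP _ _ _ i0 xpredT F isT) => j _ Fj_max.
set t := F j in Fj_max.
have v_le i : `|v 0 i| <= t * w i by rewrite -ler_pdivrMr //; exact: Fj_max.
have t_gt0 : 0 < t.
  by apply: lt_le_trans (Fj_max i0 isT); rewrite divr_gt0 ?normr_gt0.
have vj : `|v 0 j| = t * w j by rewrite /t /F divfK // gt_eqF.
have mu_vj : mu * v 0 j = \sum_i v 0 i * A i j.
  by have := congr1 (fun M : 'rV_n => M 0 j) vA_mu; rewrite !mxE => <-.
rewrite -(ler_pM2r (_ : 0 < `|v 0 j|)); last by rewrite vj mulr_gt0.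
rewrite -normrM mu_vj vj mulrCA; apply: le_trans (ler_norm_sum _ _ _) _.
apply: le_trans (ler_wpM2l (ltW t_gt0) (wA_le j)).
rewrite mulr_sumr; apply: ler_sum => i _.
by rewrite normrM (ger0_norm (A_ge0 i j)) mulrCA mulrC ler_wpM2l.
Qed.

End CollatzWielandt.

Lemma spectral_radius_le (R : realType) (n : nat) (A : 'M[R]_n) (L : R) :
  0 <= L -> (forall mu, eigenvalue A mu -> `|mu| <= L) -> spectral_radius A <= L.
Proof.
move=> L_ge0 eig_le; rewrite /spectral_radius.
set S := (X in sup X).
have [[x Sx]|S0] := pselect (S !=set0)%classic.
  by apply: ge_sup; [exists x | move=> _ [mu [/eig_le ? ->]]].
suff -> : S = set0 by rewrite sup0.
by apply/seteqP; split => x // Sx; apply: S0; exists x.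
Qed.

Definition c3t_weight {R : comNzRingType} (p : nat) (alpha beta : R) (i : nat) : R :=
  if i == 0%N then alpha else if (i < p./2)%N then 1 else if (i < p)%N then beta else 1.

Ltac decide_nat_tests :=
  repeat match goal with
  | |- context [leq ?x ?y] =>
      first [ rewrite (_ : leq x y = true); [|by lia]
            | rewrite (_ : leq x y = false); [|by apply/negbTE; lia] ]
  | |- context [@eq_op ?T ?x ?y] =>
      first [ rewrite (_ : @eq_op T x y = true); [|by lia]
            | rewrite (_ : @eq_op T x y = false); [|by apply/negbTE; lia] ]
  end.

Lemma c3t_weighted_colsum (R : comNzRingType) (p : nat) (alpha beta : R) (j : nat) :
  (2 <= p)%N -> (j < p.+2)%N ->
  \sum_(0 <= i < p.+2) (C3T_rel p.+2 i j)%:R * c3t_weight p alpha beta i =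
  if j == 0%N then (p - p./2)%:R * beta + 2
  else if (j < p./2)%N then (p - p./2)%:R * beta
  else if (j < p)%N then alpha + (p./2 - 1)%:R
  else alpha + 1.
Proof.
move=> p_ge2 j_lt.
have [a_ge1 a_lt] : (1 <= p./2)%N /\ (p./2 < p)%N by lia.
rewrite /C3T_rel /c3t_weight (_ : (p.+2 - 2 = p)%N); last by lia.
set a := p./2 in a_ge1 a_lt *.
rewrite (@big_cat_nat _ _ _ p) ?(@big_cat_nat _ _ _ a 0%N p) ?(@big_cat_nat _ _ _ 1%N 0%N a) //; try lia.
rewrite (@big_ltn _ _ _ p) // (@big_ltn _ _ _ p.+1) // (@big_geq _ _ _ p.+2) //.
have [->|[j_small|[j_big|[->|->]]]] :
  (j = 0 \/ (1 <= j < a) \/ (a <= j < p) \/ j = p \/ j = p.+1)%N by lia.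
all: do 3 (under eq_big_nat => i /andP[? ?] do decide_nat_tests; rewrite sumr_const_nat).
all: by decide_nat_tests; rewrite /= subn0 ?mulr_natl ?mul0r ?mul1r; ring.
Qed.

Lemma c3t_bound_inequalities (R : realFieldType) (P a d e : R) :
  2 <= P -> 2 * a <= P -> P <= 2 * a + 1 -> 1 <= a ->
  d * P = 8 -> e * (P - 1) = 16 -> 0 < d -> 0 < e ->
  [/\ (P - a) * (a + d) <= (P / 2 + e) ^+ 2,
      (P - a) * (a + d) + 2 * (P / 2 + e) <= (P / 2 + e) ^+ 2 * (1 + d)
    & 2 + d <= P / 2 + e].
Proof.
move=> P_ge2 a_le a_ge a_ge1 dP eP d_gt0 e_gt0; set L := P / 2 + e.
have amgm : (P - a) * a <= P ^+ 2 / 4 by nra.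
have Pad_le : (P - a) * d <= 6 by nra.
have Pe : P * e = 16 + e by nra.
have L2E : L ^+ 2 = P ^+ 2 / 4 + P * e + e ^+ 2 by rewrite /L; field.
have P2d : P ^+ 2 / 4 * d = 2 * P.
  by rewrite (_ : P ^+ 2 / 4 * d = P * (d * P) / 4) ; [rewrite dP|]; field.
split.
- by rewrite L2E; nra.
- have : L ^+ 2 + 2 * P <= L ^+ 2 * (1 + d).
    rewrite mulrDr mulr1 lerD2l -P2d.
    by apply: ler_pM; [nra | lra | rewrite L2E; nra | lra].
  by rewrite L2E; nra.
- rewrite /L; have [P4|P4] := lerP 4 P; nra.
Qed.

Section C3TWeight.

Variables (R : realType) (p : nat).
Hypothesis p_ge2 : (2 <= p)%N.

Local Notation P := (p%:R : R).
Local Notation d := (8 / P).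
Local Notation L := (P / 2 + 16 / (P - 1)).
Local Notation alpha := (1 + d).
Local Notation beta := ((p./2%:R + d) / L).

Let P_gt1 : 1 < P. Proof. by rewrite (ltr_nat R 1 p). Qed.
Let P_gt0 : 0 < P. Proof. exact: lt_trans ltr01 P_gt1. Qed.
Let d_gt0 : 0 < d. Proof. by rewrite divr_gt0. Qed.

Lemma c3t_bound_gt0 : 0 < L.
Proof. by rewrite addr_gt0 ?divr_gt0 ?subr_gt0. Qed.

Lemma c3t_weight_gt0 i : 0 < c3t_weight p alpha beta i.
Proof.
have beta_gt0 : 0 < beta by rewrite divr_gt0 ?c3t_bound_gt0 // ltr_wpDl.
by rewrite /c3t_weight; do !case: ifP => _ //; rewrite addr_gt0.
Qed.

Lemma c3t_weighted_colsum_le (j : 'I_p.+2) :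
  \sum_i adj_mx R (C3T p.+2) i j * c3t_weight p alpha beta i
    <= L * c3t_weight p alpha beta j.
Proof.
under eq_bigr do rewrite mxE.
rewrite -(big_mkord xpredT (fun i => (C3T_rel p.+2 i j)%:R * c3t_weight p alpha beta i)).
rewrite c3t_weighted_colsum // /c3t_weight.
have [a_ge1 a_le] : (1 <= p./2)%N /\ (p./2 <= p)%N by lia.
have [a_half a_half1] : 2 * (p./2)%:R <= P /\ P <= 2 * (p./2)%:R + 1.
  by rewrite -natrM natr1 !ler_nat; split; lia.
set a := p./2 in a_ge1 a_le a_half a_half1 *.
have P_ge2 : 2 <= P by rewrite (ler_nat R 2 p).
have a_ge1R : 1 <= a%:R :> R by rewrite ler1n.
have P1_gt0 : 0 < P - 1 by rewrite subr_gt0.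
have e_gt0 : 0 < 16 / (P - 1) by rewrite divr_gt0.
have [I1 I2 I3] := c3t_bound_inequalities P_ge2 a_half a_half1
  a_ge1R (divfK (lt0r_neq0 P_gt0) _) (divfK (lt0r_neq0 P1_gt0) _)
  d_gt0 e_gt0.
rewrite !natrB //.
have L_gt0 := c3t_bound_gt0.
have L_neq0 := lt0r_neq0 L_gt0.
have L_beta : L * ((a%:R + d) / L) = a%:R + d by rewrite mulrC divfK.
have small_col : (P - a%:R) * ((a%:R + d) / L) <= L.
  by rewrite mulrA ler_pdivrMr // -expr2.
have root_col : (P - a%:R) * ((a%:R + d) / L) + 2 <= L * (1 + d).
  by rewrite -(ler_pM2r L_gt0) mulrAC -expr2 mulrDl -mulrA divfK // [2 * _]mulrC.
by do ![case: ifP => _]; rewrite ?mulr1 ?L_beta //; lra.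
Qed.

End C3TWeight.

Theorem lemmaA3 (R : realType) (m : nat) : (4 <= m)%N ->
  spectral_radius (adj_mx R (C3T m)) <
    (m%:R - 2) / 2 + 32 / (m%:R - 3) ^+ 2 + 16 / (m%:R - 3).
Proof.
move=> m_ge4; have [p -> p_ge2] : exists2 p, m = p.+2 & (2 <= p)%N.
  by exists (m - 2)%N; lia.
have P_gt1 : 1 < p%:R :> R by rewrite ltr1n.
have adj_ge0 i j : 0 <= adj_mx R (C3T p.+2) i j by rewrite mxE ler0n.
apply: le_lt_trans (spectral_radius_le (ltW (c3t_bound_gt0 R p_ge2)) _) _.
  exact: eigenvalue_norm_le adj_ge0
    (fun i : 'I_p.+2 => c3t_weight_gt0 R p_ge2 i) (c3t_weighted_colsum_le R p_ge2).
have -> : p.+2%:R = p%:R + 2 :> R by rewrite -addn2 natrD.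
rewrite addrK (_ : p%:R + 2 - 3 = p%:R - 1 :> R); last by ring.
by rewrite addrAC ltrDl divr_gt0 // exprn_gt0 // subr_gt0.
Qed.
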